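(* Let $R$ be a ring such that $\operatorname{Nil}^*(R)=0$ and $R$ satisfies Köthe's conjecture, and suppose that $xy\in\operatorname{Nil}(R)$ for all $x,y\in\operatorname{Nil}(R)$ with $x^2=y^2=0$. Then $\operatorname{Nil}(R)$ is multiplicatively closed.
   Context: Rings are associative and not necessarily unital. $\operatorname{Nil}(R)$ is the set of nilpotent elements of $R$; $\operatorname{Nil}^*(R)$ is the upper nilradical, the sum of all nil two-sided ideals of $R$. $R$ satisfies Köthe's conjecture if every nil left ideal of $R$ is contained in a nil two-sided ideal. *)

(* Possibly non-unital associative rings are modelled as an
   additive abelian group (zmodType) with an associative, biadditive
   multiplication given explicitly. *)
From HB Require Import structures.
From mathcomp Require Import all_boot all_algebra.
Set Implicit Arguments. Unset Strict Implicit. Unset Printing Implicit Defensive.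
Import GRing.Theory.
Local Open Scope ring_scope.

Section Rng.
Variables (R : zmodType) (mul : R -> R -> R).

Record is_rng : Prop := IsRng {
  rng_mulA : forall x y z, mul x (mul y z) = mul (mul x y) z;
  rng_mulDl : forall x y z, mul (x + y) z = mul x z + mul y z;
  rng_mulDr : forall x y z, mul x (y + z) = mul x y + mul x z }.

(* rpow x n = x^(n+1) (no unit needed) *)
Fixpoint rpow (x : R) (n : nat) : R :=
  match n with O => x | S n' => mul x (rpow x n') end.

Definition nilpotent_el (x : R) : Prop := exists n, rpow x n = 0.

Definition additive_subgroup (I : R -> Prop) : Prop :=
  I 0 /\ (forall x y, I x -> I y -> I (x - y)).

Definition left_ideal (I : R -> Prop) : Prop :=
  additive_subgroup I /\ (forall r x, I x -> I (mul r x)).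

Definition two_sided_ideal (I : R -> Prop) : Prop :=
  left_ideal I /\ (forall r x, I x -> I (mul x r)).

Definition nil_set (I : R -> Prop) : Prop := forall x, I x -> nilpotent_el x.

(* Nil^*(R): the sum of all nil two-sided ideals, i.e. the set of finite sums
   of elements each lying in some nil two-sided ideal *)
Definition upper_nilradical (x : R) : Prop :=
  exists s : seq R,
    (forall y, y \in s -> exists I, [/\ two_sided_ideal I, nil_set I & I y])
    /\ x = \sum_(y <- s) y.

Definition koethe : Prop :=
  forall L, left_ideal L -> nil_set L ->
    exists I, [/\ two_sided_ideal I, nil_set I & forall x, L x -> I x].

End Rng.

(** The hypotheses Nil^*(R) = 0 and Köthe's conjecture combine into one
    cancellation principle: if [R z] is nil then [z = 0] (the nil left ideal
    [R z] lies in a nil ideal, hence in Nil^*(R) = 0, so [z] lies in the nil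
    left annihilator of [R], which is again inside Nil^*(R)).  Together with
    "[ab] is nilpotent iff [ba] is", this yields, for nilpotent [y], the
    insertion rule [vu = 0 -> vyu = 0], first for [v = u] of square zero and
    then in general.  Inserting [y] between the factors of [x^n = 0] gives
    [(xy)^n x = 0]. *)
From mathcomp Require Import all_boot all_algebra.
From mathcomp Require Import zify.
Import GRing.Theory.
Local Open Scope ring_scope.

(* [alt_word mul x y t = x (y x)^t], so that [(x y)^(t+1) = alt_word mul x y t * y]. *)
Fixpoint alt_word {R : zmodType} (mul : R -> R -> R) (x y : R) (t : nat) : R :=
  if t is t'.+1 then mul (alt_word mul x y t') (mul y x) else x.

Section Rng.
Context {R : zmodType} {mul : R -> R -> R} (hR : is_rng mul).

Local Notation "x ⋅ y" := (mul x y) (at level 40, left associativity).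
Local Notation rpow := (rpow mul).
Local Notation nilpotent := (nilpotent_el mul).
Local Notation alt_word := (alt_word mul).

Let mulA := rng_mulA hR.

Lemma rng_mul0r x : 0 ⋅ x = 0.
Proof.
apply: (addrI (0 ⋅ x)); rewrite addr0 -rng_mulDl //.
by rewrite addr0.
Qed.

Lemma rng_mulr0 x : x ⋅ 0 = 0.
Proof.
apply: (addrI (x ⋅ 0)); rewrite addr0 -rng_mulDr //.
by rewrite addr0.
Qed.

Lemma rng_mulBl x y z : (x - y) ⋅ z = x ⋅ z - y ⋅ z.
Proof. by apply: (addIr (y ⋅ z)); rewrite -rng_mulDl // !subrK. Qed.

Lemma rng_mulBr x y z : z ⋅ (x - y) = z ⋅ x - z ⋅ y.
Proof. by apply: (addIr (z ⋅ y)); rewrite -rng_mulDr // !subrK. Qed.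

Lemma rpow_eq0_le {x k j} : rpow x k = 0 -> (k <= j)%N -> rpow x j = 0.
Proof.
move=> xk0 /subnK <-; elim: (j - k)%N => [|p IH] //.
by rewrite addSn /= IH rng_mulr0.
Qed.

Lemma rpow_mul x a b : rpow x a ⋅ rpow x b = rpow x (a + b).+1.
Proof. by elim: a => [|a IH] //=; rewrite -mulA IH. Qed.

Lemma sqr0_nilpotent a : a ⋅ a = 0 -> nilpotent a.
Proof. by exists 1%N. Qed.

Lemma nilpotent_mulC a b : nilpotent (a ⋅ b) -> nilpotent (b ⋅ a).
Proof.
have rpowC n : rpow (b ⋅ a) n.+1 = b ⋅ rpow (a ⋅ b) n ⋅ a.
  elim: n => [|n IH]; first by rewrite /= !mulA.
  by rewrite -[LHS]/(b ⋅ a ⋅ rpow (b ⋅ a) n.+1) IH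
             -[rpow (a ⋅ b) n.+1]/(a ⋅ b ⋅ rpow (a ⋅ b) n) !mulA.
by case=> n abn0; exists n.+1; rewrite rpowC abn0 rng_mulr0 rng_mul0r.
Qed.

Lemma sandwich_sqr0 {u v} s : v ⋅ u = 0 -> u ⋅ s ⋅ v ⋅ (u ⋅ s ⋅ v) = 0.
Proof.
move=> vu0; have -> : u ⋅ s ⋅ v ⋅ (u ⋅ s ⋅ v) = u ⋅ s ⋅ (v ⋅ u) ⋅ (s ⋅ v).
  by rewrite !mulA.
by rewrite vu0 rng_mulr0 rng_mul0r.
Qed.

Section Cancellation.
Hypothesis hNil : forall x, upper_nilradical mul x -> x = 0.
Hypothesis hK : koethe mul.

Lemma nil_ideal_eq0 (I : R -> Prop) w :
  two_sided_ideal mul I -> nil_set mul I -> I w -> w = 0.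
Proof.
move=> idI nilI Iw; apply: hNil; exists [:: w]; split.
- by move=> y; rewrite inE => /eqP ->; exists I.
- by rewrite big_cons big_nil addr0.
Qed.

Lemma nil_left_ideal_eq0 (L : R -> Prop) w :
  left_ideal mul L -> nil_set mul L -> L w -> w = 0.
Proof.
move=> idL nilL Lw; have [I [idI nilI LI]] := hK L idL nilL.
exact: nil_ideal_eq0 idI nilI (LI _ Lw).
Qed.

Lemma nil_left_mul_eq0 z : (forall s, nilpotent (s ⋅ z)) -> z = 0.
Proof.
move=> nilRz.
have Rz0 s : s ⋅ z = 0.
  apply: (@nil_left_ideal_eq0 (fun w => exists s, w = s ⋅ z)); last by exists s.
  - split; first split.
    + by exists 0; rewrite rng_mul0r.
    + by move=> _ _ [a ->] [b ->]; exists (a - b); rewrite rng_mulBl.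
    + by move=> r _ [a ->]; exists (r ⋅ a); rewrite mulA.
  - by move=> _ [a ->].
apply: (@nil_left_ideal_eq0 (fun w => forall r, r ⋅ w = 0)) Rz0.
- split; first split.
  + by move=> r; rewrite rng_mulr0.
  + by move=> a b a0 b0 r; rewrite rng_mulBr a0 b0 subrr.
  + by move=> r w w0 r'; rewrite mulA w0.
- by move=> w w0; apply: sqr0_nilpotent.
Qed.

Lemma sandwich_eq0 v y u :
  (forall s, nilpotent (y ⋅ (u ⋅ s ⋅ v))) -> v ⋅ y ⋅ u = 0.
Proof.
move=> nil_yusv; apply: nil_left_mul_eq0 => s.
have -> : s ⋅ (v ⋅ y ⋅ u) = s ⋅ v ⋅ (y ⋅ u) by rewrite !mulA.
apply: nilpotent_mulC.
by have -> : y ⋅ u ⋅ (s ⋅ v) = y ⋅ (u ⋅ s ⋅ v) by rewrite !mulA.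
Qed.

Hypothesis hsq : forall x y, nilpotent x -> nilpotent y ->
  x ⋅ x = 0 -> y ⋅ y = 0 -> nilpotent (x ⋅ y).

Lemma sqr0_sandwich_sqr0 {a b} : a ⋅ a = 0 -> b ⋅ b = 0 -> a ⋅ b ⋅ a = 0.
Proof.
move=> a0 b0; apply: sandwich_eq0 => s.
have asa0 := sandwich_sqr0 s a0.
by apply: hsq => //; apply: sqr0_nilpotent.
Qed.

(* Downward induction on the exponent of [Y = rpow y j]: the step uses the
   claim for [Y * Y = rpow y (j + j).+1] to get [(Y e Y)^2 = 0], whence
   [e (Y e Y) e = 0] and [(Y e)^3 = 0]. *)
Lemma sqr0_sandwich_nilpotent y a :
  nilpotent y -> a ⋅ a = 0 -> a ⋅ y ⋅ a = 0.
Proof.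
case=> k yk0.
suff sandwich_rpow n j :
    (k <= j + n)%N -> forall b, b ⋅ b = 0 -> b ⋅ rpow y j ⋅ b = 0.
  exact: (sandwich_rpow k 0%N).
elim: n j => [|n IH] j le_k b b0.
  by rewrite (rpow_eq0_le yk0) ?rng_mulr0 ?rng_mul0r // -(addn0 j).
apply: sandwich_eq0 => s; set Y := rpow y j; set e := b ⋅ s ⋅ b.
have e0 : e ⋅ e = 0 by apply: sandwich_sqr0.
have YeY0 : Y ⋅ e ⋅ Y ⋅ (Y ⋅ e ⋅ Y) = 0.
  have -> : Y ⋅ e ⋅ Y ⋅ (Y ⋅ e ⋅ Y) = Y ⋅ (e ⋅ (Y ⋅ Y) ⋅ e) ⋅ Y by rewrite !mulA.
  by rewrite rpow_mul IH ?rng_mulr0 ?rng_mul0r //; lia.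
have eYeYe0 := sqr0_sandwich_sqr0 e0 YeY0.
exists 2%N; rewrite [rpow _ 2]/=.
have -> : Y ⋅ e ⋅ (Y ⋅ e ⋅ (Y ⋅ e)) = Y ⋅ (e ⋅ (Y ⋅ e ⋅ Y) ⋅ e) by rewrite !mulA.
by rewrite eYeYe0 rng_mulr0.
Qed.

Lemma nilpotent_insert {y u v} : nilpotent y -> v ⋅ u = 0 -> v ⋅ y ⋅ u = 0.
Proof.
move=> nily vu0; apply: sandwich_eq0 => s; exists 1%N; rewrite /=.
have -> : y ⋅ (u ⋅ s ⋅ v) ⋅ (y ⋅ (u ⋅ s ⋅ v)) =
          y ⋅ (u ⋅ s ⋅ v ⋅ y ⋅ (u ⋅ s ⋅ v)) by rewrite !mulA.
by rewrite sqr0_sandwich_nilpotent ?rng_mulr0 // sandwich_sqr0.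
Qed.

Lemma rpow_mul_alt_word x y t : rpow (x ⋅ y) t = alt_word x y t ⋅ y.
Proof.
have alt_wordS t' : x ⋅ y ⋅ alt_word x y t' = alt_word x y t'.+1.
  by elim: t' => [|t' IH] /=; rewrite mulA // IH.
by elim: t => [|t IH] //=; rewrite IH mulA alt_wordS.
Qed.

Lemma alt_word_rpow_eq0 {x y t} i : nilpotent y ->
  rpow x (t + i).+1 = 0 -> alt_word x y t ⋅ rpow x i = 0.
Proof.
move=> nily; elim: t i => [|t IH] i xti0 //=.
have -> : alt_word x y t ⋅ (y ⋅ x) ⋅ rpow x i =
          alt_word x y t ⋅ y ⋅ rpow x i.+1 by rewrite /= !mulA.
by apply: nilpotent_insert nily _; apply: IH; rewrite addnS.
Qed.

End Cancellation.
End Rng.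

Theorem lemma2p5 (R : zmodType) (mul : R -> R -> R) (hR : is_rng mul)
  (hNil : forall x, upper_nilradical mul x -> x = 0)
  (hK : koethe mul)
  (hsq : forall x y, nilpotent_el mul x -> nilpotent_el mul y ->
           mul x x = 0 -> mul y y = 0 -> nilpotent_el mul (mul x y)) :
  forall x y, nilpotent_el mul x -> nilpotent_el mul y ->
    nilpotent_el mul (mul x y).
Proof.
move=> x y [n xn0] nily.
have insert_y := nilpotent_insert hR hNil hK hsq nily.
have alt_x0 : mul (alt_word mul x y n) x = 0.
  apply: (alt_word_rpow_eq0 hR hNil hK hsq 0 nily).
  by apply: (rpow_eq0_le hR xn0); rewrite addn0.
exists n.+1; rewrite rpow_mul_alt_word //=.
have -> : mul (mul (alt_word mul x y n) (mul y x)) y =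
          mul (mul (mul (alt_word mul x y n) y) x) y by rewrite !(rng_mulA hR).
by rewrite insert_y // rng_mul0r.
Qed.
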